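(* Let $\theta$ be a discrete valuation on Johnstone's dcpo $\mathcal J$ (Scott topology) with total mass $\theta(\mathcal J)=1-r$, where $r>0$. Then $\theta+r\mu$ is not the supremum of a directed family of discrete valuations, where $\mu(U)=1$ for every non-empty Scott-open $U$ and $\mu(\emptyset)=0$.
   Context: Johnstone's dcpo: $\mathcal J=\mathbb N\times(\mathbb N\cup\{\infty\})$ ordered by $(a,b)\le(c,d)$ iff either ($a=c$ and $b\le d$) or ($d=\infty$ and $b\le c$). A valuation is a strict, monotone, modular map from the Scott-open sets to $[0,\infty]$; continuous valuations are ordered pointwise (stochastic order), and the supremum of a directed family is computed pointwise. A discrete valuation is one of the form $\sum_{i=1}^\infty r_i\delta_{x_i}$ ($r_i\in[0,\infty)$, $\delta_x$ the Dirac valuation at $x$). *)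

From mathcomp Require Import all_boot all_order all_algebra.
From mathcomp Require Import all_classical all_reals all_analysis.
Set Implicit Arguments. Unset Strict Implicit. Unset Printing Implicit Defensive.
Import Order.TTheory GRing.Theory Num.Theory.
Local Open Scope classical_set_scope.
Local Open Scope ring_scope.

(* N ∪ {∞}: None stands for ∞. *)
Definition natinf := option nat.

Definition le_inf (b d : natinf) : Prop :=
  match b, d with
  | _, None => True
  | None, Some _ => False
  | Some m, Some n => (m <= n)%N
  end.

Definition J := (nat * natinf)%type.

Definition Jle (x y : J) : Prop :=
  let: (a, b) := x in let: (c, d) := y in
  (a = c /\ le_inf b d) \/ (d = None /\ le_inf b (Some c)).

Definition Jdirected (D : set J) : Prop :=
  (exists x, D x) /\
  forall x y, D x -> D y -> exists z, D z /\ Jle x z /\ Jle y z.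

Definition Jis_sup (D : set J) (s : J) : Prop :=
  (forall d, D d -> Jle d s) /\
  (forall u, (forall d, D d -> Jle d u) -> Jle s u).

Definition scott_open (U : set J) : Prop :=
  (forall x y, U x -> Jle x y -> U y) /\
  (forall D s, Jdirected D -> Jis_sup D s -> U s -> exists d, D d /\ U d).

Definition discrete_valuation (R : realType) (nu : set J -> \bar R) : Prop :=
  exists (rs : nat -> R) (xs : nat -> J),
    (forall i, 0 <= rs i) /\
    forall U, scott_open U ->
      nu U = (\sum_(0 <= i <oo) (if `[< U (xs i) >] then (rs i)%:E else 0%E))%E.

Definition mu (R : realType) (U : set J) : \bar R :=
  if `[< U = set0 >] then 0%E else 1%E.

Definition val_le (R : realType) (nu1 nu2 : set J -> \bar R) : Prop :=
  forall U, scott_open U -> (nu1 U <= nu2 U)%E.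

Definition val_directed (R : realType) (F : set (set J -> \bar R)) : Prop :=
  (exists nu, F nu) /\
  forall nu1 nu2, F nu1 -> F nu2 ->
    exists nu3, F nu3 /\ val_le nu1 nu3 /\ val_le nu2 nu3.

Definition is_val_sup (R : realType) (F : set (set J -> \bar R))
    (nu : set J -> \bar R) : Prop :=
  forall U, scott_open U -> nu U = ereal_sup [set f U | f in F].

(* As theta(J) is finite, theta gives almost no mass to the Scott-open set
   [high K] of points above level K when K is large, while theta + r mu gives
   it mass at least r. Hence members of a directed family F with supremum
   theta + r mu have mass close to r arbitrarily high up, yet at most about r
   on any open subset of [high K].
   All but e of the mass of a member of F sits on finitely many atoms, hence in
   finitely many columns. Take nu1 with mass ~ r on [high K] and an upper bound
   nu3 of nu1 and of a member with mass ~ r above the columns of nu1's atoms.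
   An open neighbourhood of nu1's atoms ([hull]) meets those higher columns
   only in their maximal points (a, oo), so nu3 has mass ~ 2r - p on an open
   subset of [high K], where p is the mass nu3 puts on finitely many maximal
   points. A maximal point is its own upset, so an upper bound of nu3 and of a
   member with mass ~ r above these points has mass ~ p + r on an open subset
   of [high K]. One of the two masses is ~ 3r/2 > r. *)

From mathcomp Require Import all_boot all_order all_algebra.
From mathcomp Require Import all_classical all_reals all_analysis.
From mathcomp Require Import lra.
(* Imported last so that [le_inf] is not shadowed by [reals.le_inf]. *)
Set Implicit Arguments.
Unset Strict Implicit.
Unset Printing Implicit Defensive.
Import Order.TTheory GRing.Theory Num.Theory.
Local Open Scope classical_set_scope.
Local Open Scope ring_scope.

Lemma le_inf_trans b c d : le_inf b c -> le_inf c d -> le_inf b d.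
Proof. by case: b c d => [b|] [c|] [d|] //=; exact: leq_trans. Qed.

Lemma Jle_refl x : Jle x x.
Proof. by case: x => a [b|] /=; left. Qed.

Lemma Jle_trans x y z : Jle x y -> Jle y z -> Jle x z.
Proof.
case: x y z => [a b] [c d] [e f] /=.
case=> [[<- bd]|[-> bc]] [[<- df]|[-> de]].
- by left; split => //; exact: le_inf_trans df.
- by right; split => //; exact: le_inf_trans de.
- by case: f df => // _; right.
- by [].
Qed.

Lemma Jle_topE a y : Jle (a, None) y -> y = (a, None).
Proof. by case: y => c [d|] [[-> ?]|[]]. Qed.

Lemma Jsup_finite D a b d0 : D d0 -> Jis_sup D (a, Some b) -> D (a, Some b).
Proof.
move=> Dd0 [ub lst]; apply: contrapT => nDb.
have below d : D d -> exists2 c, d = (a, Some c) & (c < b)%N.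
  move=> Dd; case: d Dd (ub _ Dd) => c [e|] Dd [[ca /= eb]|[//]]; subst c.
    exists e => //; rewrite ltn_neqAle eb andbT.
    by apply: contra_notN nDb => /eqP <-.
  by [].
have [c _ cb] := below _ Dd0.
have : Jle (a, Some b) (a, Some b.-1).
  apply: lst => d /below [e -> eb]; left; split => //=.
  by rewrite -ltnS (ltn_predK eb).
by case=> [[_ /=]|[//]]; rewrite -ltnS (ltn_predK cb) ltnn.
Qed.

Lemma Jsup_top_unbounded D a n :
  Jis_sup D (a, None) -> exists2 d, D d & le_inf (Some n) d.2.
Proof.
move=> [_ lst]; apply: contrapT => /forall2NP nD.
have : Jle (a, None) ((a + n.+1)%N, None).
  apply: lst => -[c e] Dd; case: (nD (c, e)) => [/(_ Dd) []|].
  case: e Dd => [e|] _ /= en; last by [].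
  have en' : (e < n)%N by rewrite ltnNge; apply/negP.
  right; split => //=; rewrite addnS.
  exact/leqW/(leq_trans (ltnW en'))/leq_addl.
by case=> [[/eqP]|[]] //; rewrite -{1}(addn0 a) eqn_add2l.
Qed.

Definition up_closed (U : set J) := forall x y, U x -> Jle x y -> U y.

Lemma up_closed_scott_open U : up_closed U ->
  (forall a, U (a, None) -> exists m, U (a, Some m)) -> scott_open U.
Proof.
move=> Uup Utop; split => // D [a [b|]] [[d0 Dd0] _] supD Us.
  by exists (a, Some b); split => //; exact: Jsup_finite Dd0 supD.
have [m Um] := Utop _ Us.
have [[c e] Dd me] := Jsup_top_unbounded (maxn m a.+1) supD.
exists (c, e); split => //.
have [[-> _]|[_ ea]] := supD.1 _ Dd.
  apply: Uup Um _; left; split => //.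
  by apply: (le_inf_trans _ me); rewrite /= leq_maxl.
by have := le_inf_trans me ea; rewrite /= geq_max ltnn andbF.
Qed.

Lemma scott_openT : scott_open setT.
Proof. by apply: up_closed_scott_open => // a _; exists 0%N. Qed.

Lemma scott_openU U V : scott_open U -> scott_open V -> scott_open (U `|` V).
Proof.
move=> [Uup Usup] [Vup Vsup]; split.
  by move=> x y [Ux|Vx] xy; [left; exact: Uup Ux xy|right; exact: Vup Vx xy].
move=> D s dirD supD [Us|Vs].
  by have [d [Dd Ud]] := Usup D s dirD supD Us; exists d; split => //; left.
by have [d [Dd Vd]] := Vsup D s dirD supD Vs; exists d; split => //; right.
Qed.

Definition high K : set J := [set y | (K < y.1)%N /\ le_inf (Some K.+1) y.2].

Lemma high_up_closed K : up_closed (high K).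
Proof.
move=> [a b] [c d] [Ka Kb] [[<- bd]|[-> bc]]; split => //.
  exact: le_inf_trans Kb bd.
by case: b Ka Kb bc => //= b _ Kb bc; exact: leq_trans bc.
Qed.

Lemma scott_open_high K : scott_open (high K).
Proof.
apply: up_closed_scott_open; first exact: high_up_closed.
by move=> a [Ka _]; exists K.+1; split => /=.
Qed.

Lemma high_top K : high K (K.+1, None).
Proof. by []. Qed.

Lemma subset_high K L : (K <= L)%N -> high L `<=` high K.
Proof.
move=> KL [a b] [La Lb]; split; first exact: leq_ltn_trans La.
by apply: (le_inf_trans _ Lb); rewrite /= ltnS.
Qed.

Definition upset (X : set J) : set J := [set y | exists2 x, X x & Jle x y].

Lemma upset_up_closed X : up_closed (upset X).
Proof. by move=> y z [x Xx xy] yz; exists x => //; exact: Jle_trans yz. Qed.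

Lemma sub_upset X : X `<=` upset X.
Proof. by move=> x Xx; exists x => //; exact: Jle_refl. Qed.

Lemma upset_sub X U : up_closed U -> X `<=` U -> upset X `<=` U.
Proof. by move=> Uup XU y [x /XU Ux xy]; exact: Uup Ux xy. Qed.

Definition tops K L : set J := [set y | y.2 = None /\ (K < y.1 <= L)%N].

Lemma tops_sub_high K L : tops K L `<=` high K.
Proof. by move=> [a _] [/= -> /andP[Ka _]]. Qed.

Lemma upset_maximal X : (forall x, X x -> x.2 = None) -> upset X = X.
Proof.
move=> Xmax; apply/seteqP; split; last exact: sub_upset.
by move=> y [[a b] /[dup] Xx /Xmax /= bN xy]; subst b; rewrite (Jle_topE xy).
Qed.

Lemma subset_tops K K' L : (K <= K')%N -> tops K' L `<=` tops K L.
Proof.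
by move=> KK' y [yN /andP[K'y yL]]; split; rewrite // yL (leq_ltn_trans KK').
Qed.

(* A Scott-open neighbourhood of [upset X]: below a maximal point of [upset X]
   it only adds points of height > [L], and [high L] makes it up-closed. *)
Definition hull L X : set J :=
  upset X `|` [set y | upset X (y.1, None) /\ le_inf (Some L.+1) y.2]
          `|` high L.

Lemma scott_open_hull L X : scott_open (hull L X).
Proof.
have Xup := @upset_up_closed X.
apply: up_closed_scott_open => [[a b] [c d] [[Xx|[Xa Lb]]|Hx] xy|a].
- by left; left; exact: Xup Xx xy.
- case: xy => [[<- bd]|[-> bc]].
    by left; right; split => //; exact: le_inf_trans Lb bd.
  by right; case: b Xa Lb bc => // b _ Lb bc; split => //; exact: leq_trans bc.
- by right; exact: high_up_closed Hx xy.
- case=> [[Xa|[Xa _]]|[La _]]; exists L.+1; last by right; split => /=.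
  all: by left; right; split => /=.
Qed.

Lemma sub_hull L X : X `<=` hull L X.
Proof. by move=> x Xx; left; left; exact: sub_upset. Qed.

Lemma hull_sub_high K L X : (K <= L)%N -> X `<=` high K -> hull L X `<=` high K.
Proof.
move=> KL /(upset_sub (@high_up_closed K)) XK.
move=> [a b] [[/XK //|[/XK [Ka _] Lb]]|/(subset_high KL) //].
by split => //; apply: (le_inf_trans _ Lb); rewrite /= ltnS.
Qed.

Lemma hull_high_tops K L X y : (forall x, X x -> (x.1 <= K)%N) ->
  hull L X y -> high K y -> (y.1 <= L)%N -> (odflt 0 y.2 <= L)%N ->
  tops K L y.
Proof.
move=> XK; case: y => a b [[[[c e] /XK cK cy]|[_ Lb]]|[La _]] [Ka _] aL bL.
- case: cy => [[ca _]|[-> _]]; last by split => //=; rewrite Ka.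
  by move: Ka; rewrite /= -ca ltnNge cK.
- case: b Ka aL Lb bL => [b|] /= Ka aL Lb bL; last by split => //; rewrite Ka.
  by have := leq_trans Lb bL; rewrite ltnn.
- by move: La; rewrite ltnNge aL.
Qed.

Lemma hull_tops_high K L L' X y : X `<=` tops K L ->
  hull L' X y -> high L y -> (y.1 <= L')%N -> False.
Proof.
move=> Xtops; rewrite /hull upset_maximal => [+ [Ly _] yL'|x /Xtops[]//].
case=> [[/Xtops[_ /andP[_ yL]]|[/Xtops[_ /andP[_ yL]] _]]|[L'y _]].
- by move: Ly; rewrite ltnNge yL.
- by move: Ly; rewrite ltnNge yL.
- by move: L'y; rewrite ltnNge yL'.
Qed.

Lemma nat_prefix_ubound (f : nat -> nat) N K0 :
  exists2 K, (K0 <= K)%N & forall i, (i < N)%N -> (f i <= K)%N.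
Proof.
elim: N => [|N [K K0K fK]]; first by exists K0.
exists (maxn K (f N)) => [|i]; first by rewrite leq_max K0K.
rewrite ltnS leq_eqVlt => /orP[/eqP ->|iN]; first by rewrite leq_maxr.
by rewrite leq_max fK.
Qed.

Section discrete_mass.
Variables (R : realType) (rs : nat -> R) (xs : nat -> J).
Hypothesis rs_ge0 : forall i, 0 <= rs i.
Local Open Scope ereal_scope.

Let w A i : \bar R := if `[< A (xs i) >] then (rs i)%:E else 0.

Let w_ge0 A i : 0 <= w A i.
Proof. by rewrite /w; case: ifP; rewrite ?lee_fin. Qed.

Definition dval A : \bar R := \sum_(0 <= i <oo) w A i.

Definition pmass N A : R :=
  (\sum_(0 <= i < N) (if `[< A (xs i) >] then rs i else 0))%R.

Definition atoms N A : set J := xs @` [set i | (i < N)%N /\ A (xs i)].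

Lemma atoms_sub N A : atoms N A `<=` A.
Proof. by move=> _ [i [_ Ai] <-]. Qed.

Lemma dval_ge0 A : 0 <= dval A.
Proof. by apply: nneseries_ge0 => i _ _; exact: w_ge0. Qed.

Lemma le_dval A B : A `<=` B -> dval A <= dval B.
Proof.
move=> AB; apply: lee_nneseries => [i _ _|i _]; first exact: w_ge0.
rewrite /w; case: (asboolP (A (xs i))) => [/AB Bi|_]; first by rewrite asboolT.
by case: ifP; rewrite ?lee_fin.
Qed.

Lemma dvalUI A B : dval A + dval B = dval (A `|` B) + dval (A `&` B).
Proof.
rewrite /dval -!nneseriesD; try by move=> i _ _; exact: w_ge0.
apply: congr_lim; apply/funext => n; apply: eq_bigr => i _.
rewrite /w /setU /setI /mkset asbool_or asbool_and.
by case: `[< A (xs i) >]; case: `[< B (xs i) >]; rewrite /= ?adde0 ?add0e.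
Qed.

Lemma dval_split N A : dval A = (pmass N A)%:E + \sum_(N <= i <oo) w A i.
Proof.
rewrite /dval (nneseries_split 0 N) ?add0n; last by move=> i _; exact: w_ge0.
rewrite /pmass -sumEFin; congr (_ + _).
by apply: eq_bigr => i _; rewrite /w; case: ifP.
Qed.

Lemma le_pmass N A B : (forall i, (i < N)%N -> A (xs i) -> B (xs i)) ->
  (pmass N A <= pmass N B)%R.
Proof.
move=> AB; rewrite /pmass big_nat_cond [leRHS]big_nat_cond.
apply: ler_sum => i /andP[/andP[_ iN] _].
case: (asboolP (A (xs i))) => [/(AB _ iN) Bi|_]; first by rewrite asboolT.
by case: ifP.
Qed.

Lemma pmass0 N : pmass N set0 = 0%R.
Proof. by rewrite /pmass big1 // => i _; rewrite asboolF. Qed.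

Hypothesis dvalT_fin : dval setT < +oo.

Definition mass A : R := fine (dval A).

Lemma dvalE A : dval A = (mass A)%:E.
Proof.
rewrite fineK // ge0_fin_numE ?dval_ge0 //.
by apply: le_lt_trans dvalT_fin; exact: le_dval.
Qed.

Lemma le_mass A B : A `<=` B -> (mass A <= mass B)%R.
Proof. by move=> AB; rewrite -lee_fin -!dvalE; exact: le_dval. Qed.

Lemma massUI A B : (mass A + mass B = mass (A `|` B) + mass (A `&` B))%R.
Proof. by apply: EFin_inj; rewrite !EFinD -!dvalE dvalUI. Qed.

Lemma pmass_le_mass N A U : atoms N A `<=` U -> (pmass N A <= mass U)%R.
Proof.
move=> AU; apply: (@le_trans _ _ (pmass N U)).
  by apply: le_pmass => i iN Ai; apply: AU; exists i.
rewrite -lee_fin -dvalE (dval_split N) leeDl //.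
by apply: nneseries_ge0 => i _ _; exact: w_ge0.
Qed.

Lemma mass_tail (d : R) : (0 < d)%R ->
  exists N, forall A, (mass A <= pmass N A + d)%R.
Proof.
move=> d0; have /fine_cvgP[tfin /cvgr_lt/(_ _ d0) tlt] :=
  nneseries_tail_cvg dvalT_fin (fun i _ => w_ge0 setT i).
near \oo => N; exists N => A.
have tailN : \sum_(N <= i <oo) w setT i \is a fin_num by near: N.
rewrite -lee_fin -dvalE (dval_split N) EFinD leeD2l //.
apply: (@le_trans _ _ (\sum_(N <= i <oo) w setT i)).
  apply: lee_nneseries => [i _ _|i _]; first exact: w_ge0.
  by rewrite /w (asboolT (_ : setT (xs i))) //; case: ifP; rewrite ?lee_fin.
by rewrite -(fineK tailN) lee_fin; apply/ltW; near: N.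
Unshelve. all: by end_near. Qed.

Lemma mass_ge0 A : (0 <= mass A)%R.
Proof. exact/fine_ge0/dval_ge0. Qed.

Lemma mass_overlap N (d : R) U V Q :
  (forall A, mass A <= pmass N A + d)%R ->
  (forall i, (i < N)%N -> U (xs i) -> V (xs i) -> Q (xs i)) ->
  (mass U + mass V <= mass (U `|` V) + pmass N Q + d)%R.
Proof.
move=> tailN UVQ; rewrite massUI -addrA lerD2l.
apply: le_trans (tailN _) _; rewrite lerD2r.
by apply: le_pmass => i iN [Ui Vi]; exact: UVQ.
Qed.

Lemma mass_high (d : R) : (0 < d)%R -> exists K, (mass (high K) <= d)%R.
Proof.
move=> d0; have [N tailN] := mass_tail d0.
have [K _ xsK] := nat_prefix_ubound (fun i => (xs i).1) N 0.
exists K; apply: le_trans (tailN _) _; rewrite -[leRHS]add0r lerD2r -(pmass0 N).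
by apply: le_pmass => i iN [Ki _]; move: Ki; rewrite ltnNge xsK.
Qed.

End discrete_mass.

Local Open Scope ereal_scope.

Lemma discrete_valuation_mass (R : realType) (nu : set J -> \bar R) :
  discrete_valuation nu -> nu setT < +oo ->
  exists rs xs, [/\ forall i, (0 <= rs i)%R, dval rs xs setT < +oo &
    forall U, scott_open U -> nu U = (mass rs xs U)%:E].
Proof.
move=> [rs [xs [rs_ge0 nuE]]] nuT; have dvalT : nu setT = dval rs xs setT.
  exact/nuE/scott_openT.
exists rs, xs; split; rewrite -?dvalT // => U Uo.
by rewrite -dvalE -?dvalT //; exact: nuE.
Qed.

Lemma is_val_sup_le (R : realType) F (sigma nu : set J -> \bar R) U :
  is_val_sup F sigma -> F nu -> scott_open U -> nu U <= sigma U.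
Proof.
by move=> supF Fnu Uo; rewrite supF //; apply: ereal_sup_ubound; exists nu.
Qed.

Lemma is_val_sup_gt (R : realType) F (sigma : set J -> \bar R) U c :
  is_val_sup F sigma -> scott_open U -> c < sigma U ->
  exists2 nu, F nu & c < nu U.
Proof.
by move=> supF Uo; rewrite supF // => /ereal_sup_gt[_ [nu Fnu <-]]; exists nu.
Qed.

Lemma mu_eq1 (R : realType) (U : set J) y : U y -> mu R U = 1.
Proof. by move=> Uy; rewrite /mu asboolF // => U0; rewrite U0 in Uy. Qed.

Lemma mule_mu_le (R : realType) (r : R) U :
  (0 <= r)%R -> r%:E * mu R U <= r%:E.
Proof.
by move=> r0; rewrite /mu; case: ifP => _; rewrite ?mule0 ?mule1 ?lee_fin.
Qed.

Definition carries (R : realType) (nu : set J -> \bar R) X (p : R) :=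
  forall U, scott_open U -> X `<=` U -> p%:E <= nu U.

Lemma carries_atoms (R : realType) (nu : set J -> \bar R) rs xs N A :
  (forall i, 0 <= rs i)%R -> dval rs xs setT < +oo ->
  (forall U, scott_open U -> nu U = (mass rs xs U)%:E) ->
  carries nu (atoms xs N A) (pmass rs xs N A).
Proof.
by move=> rs_ge0 fin nuE U Uo AU; rewrite nuE // lee_fin; exact: pmass_le_mass.
Qed.

Section directed_family.
Variables (R : realType) (F : set (set J -> \bar R)) (r : R).
Hypothesis F_disc : forall nu, F nu -> discrete_valuation nu.
Hypothesis F_fin : forall nu, F nu -> nu setT < +oo.
Hypothesis F_dir : val_directed F.
Hypothesis F_high :
  forall K (c : R), (c < r)%R -> exists2 nu, F nu & c%:E < nu (high K).

Let F_mass nu : F nu -> exists rs xs, [/\ forall i, (0 <= rs i)%R,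
  dval rs xs setT < +oo & forall U, scott_open U -> nu U = (mass rs xs U)%:E].
Proof.
by move=> Fnu; apply: discrete_valuation_mass; [exact: F_disc|exact: F_fin].
Qed.

Lemma directed_mass_on_tops K (d : R) : (0 < d)%R ->
  exists2 nu, F nu & exists L X p,
    [/\ (K <= L)%N, X `<=` tops K L, carries nu X p &
    exists2 V, scott_open V /\ V `<=` high K &
      (2 * r - 4 * d)%:E < nu V + p%:E].
Proof.
move=> d0; have rd : (r - d < r)%R by rewrite ltrBlDr ltrDl.
have [nu1 Fnu1 nu1K] := F_high K rd.
have [r1 [x1 [r1_ge0 fin1 nu1E]]] := F_mass Fnu1.
have [N1 tail1] := mass_tail r1_ge0 fin1 d0.
have [K2 KK2 x1K2] := nat_prefix_ubound (fun i => (x1 i).1) N1 K.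
have [nu2 Fnu2 nu2K2] := F_high K2 rd.
have [nu3 [Fnu3 [le13 le23]]] := F_dir.2 _ _ Fnu1 Fnu2.
have [r3 [x3 [r3_ge0 fin3 nu3E]]] := F_mass Fnu3.
have [N3 tail3] := mass_tail r3_ge0 fin3 d0.
have [L K2L x3L] :=
  nat_prefix_ubound (fun i => maxn (x3 i).1 (odflt 0%N (x3 i).2)) N3 K2.
pose U := hull L (atoms x1 N1 (high K)).
have Uo : scott_open U := scott_open_hull _ _.
have UHo : scott_open (U `|` high K2) := scott_openU Uo (scott_open_high K2).
exists nu3 => //.
exists L, (atoms x3 N3 (tops K2 L)), (pmass r3 x3 N3 (tops K2 L)).
split; [exact: leq_trans K2L| |exact: carries_atoms|].
  by move=> y /atoms_sub /(subset_tops KK2).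
exists (U `|` high K2) => //.
  split => //; rewrite subUset; split; last exact: subset_high.
  exact: hull_sub_high (leq_trans KK2 K2L) (@atoms_sub _ _ _).
have nu1_high : (r - d < mass r1 x1 (high K))%R.
  by rewrite -lte_fin -nu1E //; exact: scott_open_high.
have nu1_U : (pmass r1 x1 N1 (high K) <= mass r1 x1 U)%R.
  by apply: pmass_le_mass => //; exact: sub_hull.
have le13_U : (mass r1 x1 U <= mass r3 x3 U)%R.
  by rewrite -lee_fin -nu1E // -nu3E //; exact: le13.
have nu3_high : (r - d < mass r3 x3 (high K2))%R.
  rewrite -lte_fin -nu3E; last exact: scott_open_high.
  exact: lt_le_trans nu2K2 (le23 _ (scott_open_high K2)).
have nu3_overlap : (mass r3 x3 U + mass r3 x3 (high K2) <=
    mass r3 x3 (U `|` high K2) + pmass r3 x3 N3 (tops K2 L) + d)%R.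
  apply: mass_overlap => // i iN Ui Hi.
  have := x3L i iN; rewrite geq_max => /andP[iL iL'].
  by apply: hull_high_tops Ui Hi iL iL' => _ [j [jN _] <-]; exact: x1K2.
rewrite nu3E // -EFinD lte_fin.
by have := tail1 (high K); lra.
Qed.

Lemma directed_mass_above_tops K L X p nu (d : R) : F nu -> (K <= L)%N ->
  X `<=` tops K L -> carries nu X p -> (0 < d)%R ->
  exists2 nu', F nu' & exists2 V, scott_open V /\ V `<=` high K &
    (p + r - 2 * d)%:E < nu' V.
Proof.
move=> Fnu KL Xtops Xp d0; have rd : (r - d < r)%R by rewrite ltrBlDr ltrDl.
have [nu5 Fnu5 nu5L] := F_high L rd.
have [nu4 [Fnu4 [le4 le54]]] := F_dir.2 _ _ Fnu Fnu5.
have [r4 [x4 [r4_ge0 fin4 nu4E]]] := F_mass Fnu4.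
have [N4 tail4] := mass_tail r4_ge0 fin4 d0.
have [L' KL' x4L'] := nat_prefix_ubound (fun i => (x4 i).1) N4 K.
pose U := hull L' X.
have Uo : scott_open U := scott_open_hull _ _.
have UHo : scott_open (U `|` high L) := scott_openU Uo (scott_open_high L).
exists nu4 => //; exists (U `|` high L) => //.
  split => //; rewrite subUset; split; last exact: subset_high.
  exact: hull_sub_high KL' (subset_trans Xtops (@tops_sub_high _ _)).
have nu4_U : (p <= mass r4 x4 U)%R.
  rewrite -lee_fin -nu4E //; apply: le_trans (le4 _ Uo).
  by apply: Xp => //; exact: sub_hull.
have nu4_high : (r - d < mass r4 x4 (high L))%R.
  rewrite -lte_fin -nu4E; last exact: scott_open_high.
  exact: lt_le_trans nu5L (le54 _ (scott_open_high L)).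
have nu4_overlap : (mass r4 x4 U + mass r4 x4 (high L) <=
    mass r4 x4 (U `|` high L) + pmass r4 x4 N4 set0 + d)%R.
  apply: mass_overlap => // i iN Ui Hi.
  exact: hull_tops_high Xtops Ui Hi (x4L' i iN).
rewrite nu4E // lte_fin; move: nu4_overlap; rewrite pmass0; lra.
Qed.

Lemma directed_high_mass K (e : R) : (0 < e)%R ->
  exists2 nu, F nu & exists2 V, scott_open V /\ V `<=` high K &
    (3 * r / 2 - e)%:E < nu V.
Proof.
move=> e0; have d0 : (0 < e / 3)%R by rewrite divr_gt0.
have [nu3 Fnu3 [L [X [p [KL Xtops Xp [V2 V2K nu3V2]]]]]] :=
  directed_mass_on_tops K d0.
have [nu4 Fnu4 [V3 V3K nu4V3]] := directed_mass_above_tops Fnu3 KL Xtops Xp d0.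
have [lt3|ge3] := ltP ((3 * r / 2 - e)%:E) (nu3 V2).
  by exists nu3 => //; exists V2.
exists nu4 => //; exists V3 => //; apply: le_lt_trans nu4V3; rewrite lee_fin.
have := lt_le_trans nu3V2 (leeD2r _ ge3); rewrite -EFinD lte_fin; lra.
Qed.

End directed_family.

Local Close Scope ereal_scope.

Theorem proposition3p12 (R : realType) (theta : set J -> \bar R) (r : R) :
  discrete_valuation theta ->
  theta setT = (1 - r)%:E ->
  0 < r ->
  ~ exists F : set (set J -> \bar R),
      (forall nu, F nu -> discrete_valuation nu) /\
      val_directed F /\
      is_val_sup F (fun U => (theta U + r%:E * mu R U)%E).
Proof.
move=> [rt [xt [rt_ge0 thetaE]]] thetaT r0 [F [F_disc [F_dir F_sup]]].
have dvalT : dval rt xt setT = (1 - r)%:E.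
  by rewrite -thetaT thetaE //; exact: scott_openT.
have fin : (dval rt xt setT < +oo)%E by rewrite dvalT ltry.
have thetaM U : scott_open U -> theta U = (mass rt xt U)%:E.
  by move=> Uo; rewrite -(dvalE rt_ge0 fin); exact: thetaE.
have F_le nu U : F nu -> scott_open U -> (nu U <= (mass rt xt U + r)%:E)%E.
  move=> Fnu Uo; apply: le_trans (is_val_sup_le F_sup Fnu Uo) _.
  by rewrite /= thetaM // EFinD leeD2l // mule_mu_le // ltW.
have F_fin nu : F nu -> (nu setT < +oo)%E.
  by move=> Fnu; apply: le_lt_trans (F_le _ _ Fnu scott_openT) (ltry _).
have F_high K c : c < r -> exists2 nu, F nu & (c%:E < nu (high K))%E.
  move=> cr; apply: (is_val_sup_gt F_sup (scott_open_high K)).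
  rewrite /= thetaM; last exact: scott_open_high.
  rewrite (mu_eq1 _ (high_top K)) mule1 -EFinD lte_fin.
  by have := mass_ge0 xt rt_ge0 (high K); lra.
have r4 : 0 < r / 4 by rewrite divr_gt0.
have [K thetaK] := mass_high rt_ge0 fin r4.
have [nu Fnu [V [Vo VK] nuV]] :=
  directed_high_mass F_disc F_fin F_dir F_high K r4.
have := lt_le_trans nuV (F_le _ _ Fnu Vo); rewrite lte_fin.
by have := le_mass rt_ge0 fin VK; lra.
Qed.
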